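(* Let $\mathcal M$ be a sufficiently saturated geometric structure with universe $M$. Let $\mathbf x=(x_1,\dots,x_n)$ and $y$ be variables, and let $\chi(\mathbf x,y)$ be a formula of the form $\bigwedge_{i=1}^r C_i(\mathbf x^i,y)$, where each $\mathbf x^i$ is a subtuple of $\mathbf x$ and each $C_i(\mathbf x^i,y)$ is a formula defining an $\mathrm{acl}(\emptyset)$-definable $(|\mathbf x^i|+1)$-curve. Let $\mathbf x'$ be the subtuple of $\mathbf x$ consisting of all variables occurring in some $\mathbf x^i$. Then $\chi(\mathbf x,y)$ is equivalent in $\mathcal M$ to a disjunction $$E(\mathbf x',y)\vee\bigvee_{l=1}^L\bigl(y=q_l\wedge\phi_l(\mathbf x')\bigr),$$ where $E(\mathbf x',y)$ is a formula defining an $\mathrm{acl}(\emptyset)$-definable $(|\mathbf x'|+1)$-curve, $q_1,\dots,q_L\in\mathrm{acl}(\emptyset)$, each $\phi_l(\mathbf x')$ defines a boolean combination of $\mathrm{acl}(\emptyset)$-definable curve-based cylinders, and $\mathcal M\models E(\mathbf x',y)\rightarrow\bigwedge_{l=1}^L y\neq q_l$.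
   Context: A structure $\mathcal M$ is a geometric structure if every model of its theory satisfies: (1) Exchange: $a\in\mathrm{acl}(bC)\setminus\mathrm{acl}(C)\Rightarrow b\in\mathrm{acl}(aC)$; (2) Uniform finiteness: for each formula $\psi(y,\mathbf w)$ there is $k$ such that for every tuple $\mathbf a$ the set $\{b:\psi(b,\mathbf a)\}$ is infinite or has size $\le k$. Dimension of a definable set $X\subseteq M^n$ (defined by $\Phi$ over parameters $B$): the largest $d$ such that in a saturated extension some tuple satisfying $\Phi$ has a subtuple $(a_{i_1},\dots,a_{i_d})$ with $a_{i_{j+1}}\notin\mathrm{acl}(\{a_{i_1},\dots,a_{i_j}\}\cup B)$. An $A$-definable $n$-curve is a subset of $M^n$ of dimension $\le 1$ definable with parameters from $A$. A set $\tilde C\subseteq M^m$ is an $A$-definable cylinder based on an $n$-curve if there are indices $1\le i_1<\dots<i_n\le m$ and an $A$-definable $n$-curve $C$ with $\tilde C=\{(x_1,\dots,x_m)\in M^m:(x_{i_1},\dots,x_{i_n})\in C\}$; an $A$-definable curve-based cylinder is such a cylinder for some $n$. ''$\mathrm{acl}(\emptyset)$-definable'' means definable with parameters from $\mathrm{acl}(\emptyset)$. *)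

From Stdlib Require Import List.
From mathcomp Require Import all_boot.



Set Implicit Arguments.
Unset Strict Implicit.
Unset Printing Implicit Defensive.

Record signature := Signature {
  fsym : Type; farity : fsym -> nat;
  rsym : Type; rarity : rsym -> nat }.

Section Syntax.
Variable L : signature.

Inductive term : Type :=
| Tvar : nat -> term
| Tfun : forall f : fsym L, ('I_(farity f) -> term) -> term.

Inductive formula : Type :=
| Ffalse : formula
| Feq : term -> term -> formula
| Frel : forall r : rsym L, ('I_(rarity r) -> term) -> formula
| Fnot : formula -> formula
| Fand : formula -> formula -> formula
| For : formula -> formula -> formula
| Fex : nat -> formula -> formula
| Fall : nat -> formula -> formula.

Fixpoint occurs_t (k : nat) (t : term) : Prop :=
  match t with
  | Tvar n => n = k
  | Tfun _ args => exists i, occurs_t k (args i)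
  end.

Fixpoint free (k : nat) (phi : formula) : Prop :=
  match phi with
  | Ffalse => False
  | Feq t1 t2 => occurs_t k t1 \/ occurs_t k t2
  | Frel _ args => exists i, occurs_t k (args i)
  | Fnot p => free k p
  | Fand p q => free k p \/ free k q
  | For p q => free k p \/ free k q
  | Fex n p => free k p /\ k <> n
  | Fall n p => free k p /\ k <> n
  end.
End Syntax.

Record structure (L : signature) := Structure {
  univ :> Type;
  univ_elt : univ;
  funs : forall f : fsym L, ('I_(farity f) -> univ) -> univ;
  rels : forall r : rsym L, ('I_(rarity r) -> univ) -> Prop }.

Definition upd (T : Type) (v : nat -> T) (n : nat) (a : T) : nat -> T :=
  fun k => if k == n then a else v k.

Section Semantics.
Variables (L : signature) (M : structure L).

Fixpoint teval (v : nat -> M) (t : term L) : M :=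
  match t with
  | Tvar k => v k
  | Tfun f args => @funs L M f (fun i => teval v (args i))
  end.

Fixpoint sat (v : nat -> M) (phi : formula L) : Prop :=
  match phi with
  | Ffalse => False
  | Feq t1 t2 => teval v t1 = teval v t2
  | Frel r args => @rels L M r (fun i => teval v (args i))
  | Fnot p => ~ sat v p
  | Fand p q => sat v p /\ sat v q
  | For p q => sat v p \/ sat v q
  | Fex n p => exists a, sat (upd v n a) p
  | Fall n p => forall a, sat (upd v n a) p
  end.

(* The environment where variables 0..n-1 are given by the tuple x and the
   remaining variables by v. *)
Definition ext (n : nat) (x : 'I_n -> M) (v : nat -> M) : nat -> M :=
  fun k => match (insub k : option 'I_n) with Some i => x i | None => v k end.

(* algebraic closure of C in M: a satisfies a formula phi(y, c) (y = variable 0,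
   parameters c from C) with finitely many solutions *)
Definition acl (C : M -> Prop) (a : M) : Prop :=
  exists (phi : formula L) (v : nat -> M),
    (forall k, free k phi -> k <> 0 -> C (v k)) /\
    sat (upd v 0 a) phi /\
    exists s : list M, forall b, sat (upd v 0 b) phi -> In b s.

Definition omega_saturated : Prop :=
  forall (F : list nat) (v : nat -> M) (Sigma : formula L -> Prop),
    (forall phi, Sigma phi -> forall k, free k phi -> k = 0 \/ In k F) ->
    (forall s : list (formula L), (forall phi, In phi s -> Sigma phi) ->
       exists a, forall phi, In phi s -> sat (upd v 0 a) phi) ->
    exists a, forall phi, Sigma phi -> sat (upd v 0 a) phi.

Definition exchange : Prop :=
  forall (C : M -> Prop) (a b : M),
    acl (fun c => c = b \/ C c) a -> ~ acl C a -> acl (fun c => c = a \/ C c) b.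

Definition uniform_finiteness : Prop :=
  forall psi : formula L, exists k : nat, forall v : nat -> M,
    (~ exists s : list M, forall b, sat (upd v 0 b) psi -> In b s) \/
    (exists s : list M, (length s <= k)%coq_nat /\
        forall b, sat (upd v 0 b) psi -> In b s).
End Semantics.

Definition models_theory_of (L : signature) (M N : structure L) : Prop :=
  forall phi : formula L, (forall v : nat -> M, sat v phi) ->
                          forall w : nat -> N, sat w phi.

Definition geometric (L : signature) (M : structure L) : Prop :=
  forall N : structure L, models_theory_of M N ->
    exchange N /\ uniform_finiteness N.

Definition elementary_embedding (L : signature) (M N : structure L)
  (e : M -> N) : Prop :=
  forall (phi : formula L) (v : nat -> M), sat v phi <-> sat (fun k => e (v k)) phi.

Definition strictly_increasing (m n : nat) (f : 'I_m -> 'I_n) : Prop :=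
  forall i j : 'I_m, i < j -> f i < f j.

Section Definable.
Variables (L : signature) (M : structure L).

Definition params_in (A : M -> Prop) (n : nat) (phi : formula L) (v : nat -> M) :=
  forall k, free k phi -> n <= k -> A (v k).

(* dimension of the set defined by phi (tuple variables 0..n-1, parameters
   v k for the other free variables, forming the set B) is >= d: in some
   elementary extension N (equivalently in a saturated one), some tuple a
   satisfying phi has a subtuple a_{i_1},...,a_{i_d} with
   a_{i_{j+1}} not in acl(a_{i_1},...,a_{i_j}, B). *)
Definition dim_ge (n : nat) (phi : formula L) (v : nat -> M) (d : nat) : Prop :=
  exists (N : structure L) (e : M -> N), elementary_embedding e /\
  exists a : 'I_n -> N, sat (ext a (fun k => e (v k))) phi /\
  exists idx : 'I_d -> 'I_n, strictly_increasing idx /\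
    forall j : 'I_d,
      ~ acl (fun b => (exists j' : 'I_d, j' < j /\ b = a (idx j')) \/
                      (exists k, free k phi /\ n <= k /\ b = e (v k)))
            (a (idx j)).

Definition curve (A : M -> Prop) (n : nat) (X : ('I_n -> M) -> Prop) : Prop :=
  exists (phi : formula L) (v : nat -> M),
    params_in A n phi v /\
    (forall x, X x <-> sat (ext x v) phi) /\
    (forall d, dim_ge n phi v d -> d <= 1).

Definition curve_cylinder (A : M -> Prop) (m : nat) (X : ('I_m -> M) -> Prop) : Prop :=
  exists (k : nat) (tau : 'I_k -> 'I_m) (Cc : ('I_k -> M) -> Prop),
    strictly_increasing tau /\ curve A Cc /\
    forall x, X x <-> Cc (fun i => x (tau i)).
End Definable.

Inductive bool_comb (T : Type) (P : (T -> Prop) -> Prop) : (T -> Prop) -> Prop :=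
| bc_base X : P X -> bool_comb P X
| bc_not X : bool_comb P X -> bool_comb P (fun x => ~ X x)
| bc_and X Y : bool_comb P X -> bool_comb P Y -> bool_comb P (fun x => X x /\ Y x)
| bc_or X Y : bool_comb P X -> bool_comb P Y -> bool_comb P (fun x => X x \/ Y x).

Definition snoc (T : Type) (m : nat) (x : 'I_m -> T) (y : T) : 'I_m.+1 -> T :=
  fun k => match unlift ord_max k with Some k' => x k' | None => y end.

From Stdlib Require Import List Classical ClassicalEpsilon.
From Stdlib Require Import FunctionalExtensionality PropExtensionality.
From mathcomp Require Import all_boot.
Set Implicit Arguments.
Unset Strict Implicit.
Unset Printing Implicit Defensive.

(* For each coordinate x_k of C_i, the
   projection of C_i to (x_k, y) has only finitely many values of y with an
   infinite fiber: by saturation an infinite definable set of such y contains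
   a y outside acl(0), and then its fiber contains an x_k outside acl(y); by
   exchange (x_k, y) is a generic pair, contradicting that C_i is a curve.
   Being finitely many solutions of a formula over acl(0), these bad values q_l
   lie in acl(0).  Away from them all fibers are finite, hence uniformly
   bounded, and the bound persists in elementary extensions; so every
   coordinate of a point of E := chi /\ y <> q_l is algebraic over y, and
   exchange makes E a curve.  Over a bad value, chi(x, q_l) is a conjunction
   of the curves C_i(-, q_l), i.e. of curve-based cylinders. *)

(** * Finite predicates *)

Lemma cat_app (T : Type) (s1 s2 : seq T) : s1 ++ s2 = app s1 s2.
Proof. by elim: s1 => //= x s1 ->. Qed.

Lemma size_length (T : Type) (s : seq T) : size s = length s.
Proof. by elim: s => //= x s ->. Qed.

Lemma In_cat (T : Type) (x : T) s1 s2 :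
  List.In x (s1 ++ s2) <-> List.In x s1 \/ List.In x s2.
Proof. rewrite cat_app; split; [exact: in_app_or|exact: in_or_app]. Qed.

Lemma In_mem (T : eqType) (x : T) (s : seq T) : List.In x s <-> x \in s.
Proof.
elim: s => [//|y s IH] /=; rewrite in_cons; split.
- by case=> [->|/IH H]; rewrite ?eqxx // H orbT.
- by case/orP => [/eqP ->|/IH H]; [left|right].
Qed.

Lemma In_map (T U : Type) (f : T -> U) (s : seq T) y :
  List.In y (map f s) <-> exists x, List.In x s /\ y = f x.
Proof.
elim: s => [|x s IH] /=; first by split=> [[]|[? [[]]]].
rewrite IH; split.
- by case=> [<-|[x' [H ->]]]; [exists x; split; [left|]|exists x'; split; [right|]].
- by case=> [x' [[<-|H] ->]]; [left|right; exists x'].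
Qed.

Lemma In_nth_ord (T : Type) (d : T) (s : seq T) y :
  List.In y s <-> exists i : 'I_(size s), y = nth d s i.
Proof.
elim: s y => [|y0 s IH] y /=; first by split=> [[]|[[]]].
split.
- case=> [<-|/IH [i ->]]; first by exists ord0.
  by exists (lift ord0 i).
- case=> [[[|i] Hi]] /= ->; first by left.
  right; apply/IH; by exists (Ordinal (Hi : i < size s)).
Qed.

Definition finite_pred (T : Type) (S : T -> Prop) :=
  exists l : seq T, forall b, S b -> List.In b l.

Lemma finite_pred_bigcup (J T : Type) (P : J -> T -> Prop) (s : seq J) :
  (forall j, List.In j s -> finite_pred (P j)) ->
  finite_pred (fun y => exists2 j, List.In j s & P j y).
Proof.
elim: s => [|j s IH] H; first by exists [::] => y [? []].
have [l1 H1] := H j (or_introl erefl).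
have [l2 H2] := IH (fun j' Hj' => H j' (or_intror Hj')).
exists (l1 ++ l2) => y [j' [<-|Hj'] Hy]; apply/In_cat; first by left; exact: H1.
by right; apply: H2; exists j'.
Qed.

Lemma finite_pred_bigcup_fin (J : finType) (T : Type) (P : J -> T -> Prop) :
  (forall j, finite_pred (P j)) -> finite_pred (fun y => exists j, P j y).
Proof.
move=> H; have [l Hl] := finite_pred_bigcup (s := enum J) (fun j _ => H j).
by exists l => y [j Hj]; apply: Hl; exists j => //; apply/In_mem; rewrite mem_enum.
Qed.

Lemma finite_pred_exact (T : Type) (S : T -> Prop) :
  finite_pred S -> exists l : seq T, forall b, List.In b l <-> S b.
Proof.
case=> l; elim: l S => [|a l IH] S HS.
  by exists [::] => b; split=> [[]|/HS []].
have [l' Hl'] : exists l', forall b, List.In b l' <-> S b /\ b <> a.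
  by apply: IH => b [Hb Hba]; case: (HS b Hb) => // E; case: Hba.
case: (classic (S a)) => Ha; [exists (a :: l')|exists l'] => b /=; rewrite Hl'.
- by split=> [[<-|[]]|Hb] //; case: (classic (b = a)) => [->|]; [left|right].
- by split=> [[]|Hb] //; split => // E; apply: Ha; rewrite -E.
Qed.

Definition atmost (T : Type) (n : nat) (S : T -> Prop) :=
  exists l : seq T, size l <= n /\ forall b, S b -> List.In b l.

Lemma atmost0 (T : Type) (S : T -> Prop) : atmost 0 S <-> ~ exists a, S a.
Proof.
split=> [[l [Hl H]] [a Ha]|H].
- by case: l Hl H => // _ /(_ a Ha).
- exists [::]; split => // b Hb; case: H; by exists b.
Qed.

Lemma atmostS (T : Type) n (S : T -> Prop) :
  atmost n.+1 S <-> forall a, S a -> atmost n (fun b => S b /\ b <> a).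
Proof.
split.
- move=> [l [Hl H]] a Ha. have [l1 [l2 E]] := in_split _ _ (H a Ha). rewrite -cat_app in E.
  exists (l1 ++ l2); split.
  + by move: Hl; rewrite E size_cat /= size_cat addnS.
  + move=> b [Hb Hba]; move: (H b Hb); rewrite E => /In_cat [H1|[H1|H1]]; apply/In_cat.
    * by left.
    * by case: Hba.
    * by right.
- move=> H. case: (classic (exists a, S a)) => [[a Ha]|Hn].
  + have [l [Hl Hl']] := H a Ha. exists (a :: l); split => // b Hb.
    case: (classic (b = a)) => [->|Hba]; [by left|right; exact: Hl'].
  + exists [::]; split => // b Hb; case: Hn; by exists b.
Qed.

Lemma atmost_imp (T : Type) n (S1 S2 : T -> Prop) :
  (forall b, S2 b -> S1 b) -> atmost n S1 -> atmost n S2.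
Proof. move=> H [l [Hl Hl']]; exists l; split => // b /H; exact: Hl'. Qed.

Lemma atmost_iff (T : Type) n (S1 S2 : T -> Prop) :
  (forall b, S1 b <-> S2 b) -> (atmost n S1 <-> atmost n S2).
Proof. by move=> H; split; apply: atmost_imp => b /H. Qed.

Lemma finite_pred_atmost (T : Type) n (S : T -> Prop) : atmost n S -> finite_pred S.
Proof. by case=> l [_ H]; exists l. Qed.

(** * Formulas and satisfaction *)

Section Formulas.
Variable L : signature.
Implicit Types (phi : formula L) (t : term L).

Fixpoint tbound t : nat := match t with
  | Tvar k => k.+1
  | Tfun f args => \max_(i < farity f) tbound (args i) end.

Fixpoint fbound phi : nat := match phi with
  | Ffalse => 0
  | Feq t1 t2 => maxn (tbound t1) (tbound t2)
  | Frel r args => \max_(i < rarity r) tbound (args i)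
  | Fnot p => fbound p
  | Fand p q => maxn (fbound p) (fbound q)
  | For p q => maxn (fbound p) (fbound q)
  | Fex _ p => fbound p
  | Fall _ p => fbound p end.

Lemma occurs_tbound k t : occurs_t k t -> k < tbound t.
Proof.
elim: t => [n /= -> //| f args IH /= [i Hi]].
apply: (leq_trans (IH i Hi)). exact: (leq_bigmax_cond (F := fun i => tbound (args i)) i).
Qed.

Lemma free_fbound k phi : free k phi -> k < fbound phi.
Proof.
elim: phi => /= [//|t1 t2 [H|H]|r args [i Hi]|p IH H|p IHp q IHq [H|H]|p IHp q IHq [H|H]
  |n p IH [H _]|n p IH [H _]].
- by rewrite leq_max (occurs_tbound H).
- by rewrite leq_max (occurs_tbound H) orbT.
- apply: (leq_trans (occurs_tbound Hi)). exact: (leq_bigmax_cond (F := fun i => tbound (args i)) i).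
- exact: IH.
- by rewrite leq_max (IHp H).
- by rewrite leq_max (IHq H) orbT.
- by rewrite leq_max (IHp H).
- by rewrite leq_max (IHq H) orbT.
- exact: IH.
- exact: IH.
Qed.

Fixpoint trename (g : nat -> nat) t := match t with
  | Tvar k => Tvar L (g k)
  | Tfun f args => Tfun (fun i => trename g (args i)) end.

Fixpoint frename (g : nat -> nat) phi : formula L := match phi with
  | Ffalse => Ffalse L
  | Feq t1 t2 => Feq (trename g t1) (trename g t2)
  | Frel r args => Frel (fun i => trename g (args i))
  | Fnot p => Fnot (frename g p)
  | Fand p q => Fand (frename g p) (frename g q)
  | For p q => For (frename g p) (frename g q)
  | Fex n p => let n' := (\max_(k < fbound p) g k).+1 in
       Fex n' (frename (fun k => if k == n then n' else g k) p)
  | Fall n p => let n' := (\max_(k < fbound p) g k).+1 in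
       Fall n' (frename (fun k => if k == n then n' else g k) p) end.

Lemma occurs_trename k g t : occurs_t k (trename g t) -> exists k', occurs_t k' t /\ k = g k'.
Proof.
elim: t => [n /= <-|f args IH /= [i Hi]]; first by exists n.
have [k' [H1 H2]] := IH i Hi. by exists k'; split => //; exists i.
Qed.

Lemma free_frename k g phi : free k (frename g phi) -> exists k', free k' phi /\ k = g k'.
Proof.
elim: phi k g => [|t1 t2|r args|p IH|p IHp q IHq|p IHp q IHq|n p IH|n p IH] k g /=.
- by [].
- by case=> /occurs_trename [k' [H ->]]; exists k'; split => //; [left|right].
- case=> i /occurs_trename [k' [H ->]]; exists k'; split => //; by exists i.
- exact: IH.
- by case=> [/IHp|/IHq] [k' [H ->]]; exists k'; split => //; [left|right].
- by case=> [/IHp|/IHq] [k' [H ->]]; exists k'; split => //; [left|right].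
- case=> /IH [k' [H ->]] Hn. exists k'. case: eqP Hn => [//|Hk _]; by split.
- case=> /IH [k' [H ->]] Hn. exists k'. case: eqP Hn => [//|Hk _]; by split.
Qed.

Section Satisfaction.
Variable K : structure L.

Lemma upd_eq (v : nat -> K) n a : upd v n a n = a.
Proof. by rewrite /upd eqxx. Qed.
Lemma upd_neq (v : nat -> K) n a k : k <> n -> upd v n a k = v k.
Proof. by rewrite /upd; case: eqP. Qed.

Lemma teval_coinc (w w' : nat -> K) t :
  (forall k, occurs_t k t -> w k = w' k) -> teval w t = teval w' t.
Proof.
elim: t => [n /= H|f args IH /= H]; first exact: H.
congr funs; apply: functional_extensionality => i; apply: IH => k Hk; apply: H; by exists i.
Qed.

Lemma sat_coinc phi (w w' : nat -> K) :
  (forall k, free k phi -> w k = w' k) -> (sat w phi <-> sat w' phi).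
Proof.
elim: phi w w' => //= [t1 t2|r args|p IH|p IHp q IHq|p IHp q IHq|n p IH|n p IH] w w' H.
- rewrite (teval_coinc (w' := w') (t := t1)) ?(teval_coinc (w' := w') (t := t2)) //.
  + by move=> k Hk; apply: H; right.
  + by move=> k Hk; apply: H; left.
- have -> // : (fun i => teval w (args i)) = (fun i => teval w' (args i)).
  apply: functional_extensionality => i; apply: teval_coinc => k Hk; apply: H; by exists i.
- by rewrite (IH w w').
- by rewrite (IHp w w') ?(IHq w w') // => k Hk; apply: H; [right|left].
- by rewrite (IHp w w') ?(IHq w w') // => k Hk; apply: H; [right|left].
- split=> [[a Ha]|[a Ha]]; exists a;
    [rewrite -(IH (upd w n a))|rewrite (IH _ (upd w' n a))] => // k Hk;
  rewrite /upd; case: eqP => // /eqP Hkn; apply: H; split => //; exact/eqP.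
- split=> Ha a; [rewrite -(IH (upd w n a))|rewrite (IH _ (upd w' n a))] => // k Hk;
  rewrite /upd; case: eqP => // /eqP Hkn; apply: H; split => //; exact/eqP.
Qed.

Lemma sat_ext phi (w w' : nat -> K) : (forall k, w k = w' k) -> (sat w phi <-> sat w' phi).
Proof. by move=> H; apply: sat_coinc. Qed.

Lemma sat_ext_imp phi (w w' : nat -> K) : (forall k, w k = w' k) -> sat w phi -> sat w' phi.
Proof. by move=> H; rewrite (sat_ext phi H). Qed.

Lemma sat_coinc_imp phi (w w' : nat -> K) :
  (forall k, free k phi -> w k = w' k) -> sat w phi -> sat w' phi.
Proof. by move=> H; rewrite (sat_coinc H). Qed.

Lemma teval_trename (w : nat -> K) g t : teval w (trename g t) = teval (fun k => w (g k)) t.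
Proof.
elim: t => [n //|f args IH /=]. congr funs; apply: functional_extensionality => i; exact: IH.
Qed.

(* renaming rebinds a quantified variable to one beyond the renamed free variables *)
Lemma upd_fresh (w : nat -> K) (g : nat -> nat) n a p k : free k p ->
  let n' := (\max_(k < fbound p) g k).+1 in
  upd w n' a (if k == n then n' else g k) = upd (fun k => w (g k)) n a k.
Proof.
move=> Hk n'; rewrite /upd; case: (k =P n) => [_|Hkn]; first by rewrite eqxx.
suff /negbTE -> : g k != n' by [].
apply/eqP => He; have := leq_bigmax (F := fun k : 'I_(fbound p) => g k) (Ordinal (free_fbound Hk)).
by rewrite /= He /n' ltnn.
Qed.

Lemma sat_frename phi g (w : nat -> K) : sat w (frename g phi) <-> sat (fun k => w (g k)) phi.
Proof.
elim: phi g w => //= [t1 t2|r args|p IH|p IHp q IHq|p IHp q IHq|n p IH|n p IH] g w.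
- by rewrite !teval_trename.
- have -> // : (fun i => teval w (trename g (args i))) =
                (fun i => teval (fun k => w (g k)) (args i)).
  apply: functional_extensionality => i; exact: teval_trename.
- by rewrite IH.
- by rewrite IHp IHq.
- by rewrite IHp IHq.
- split=> [[a Ha]|[a Ha]]; exists a; move: Ha; rewrite IH (sat_coinc (@upd_fresh w g n a p)) //.
- split=> Ha a; move: (Ha a); rewrite IH (sat_coinc (@upd_fresh w g n a p)) //.
Qed.

End Satisfaction.

Definition Ftrue : formula L := Fnot (Ffalse L).
Fixpoint Exs (l : seq nat) phi := if l is n :: l' then Fex n (Exs l' phi) else phi.
Fixpoint Falls (l : seq nat) phi := if l is n :: l' then Fall n (Falls l' phi) else phi.
Definition FAnds (s : seq (formula L)) := foldr (@Fand L) Ftrue s.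

Fixpoint AtMost (n : nat) phi : formula L := match n with
  | 0 => Fnot (Fex 0 phi)
  | n'.+1 => Fall (fbound phi).+1
       (For (Fnot (frename (fun k => if k == 0 then (fbound phi).+1 else k) phi))
            (AtMost n' (Fand phi (Fnot (Feq (Tvar L 0) (Tvar L (fbound phi).+1)))))) end.

Lemma free_Exs k l phi : free k (Exs l phi) -> free k phi /\ k \notin l.
Proof.
elim: l => [//|n l IH /= [/IH [H1 H2] H3]]; split => //.
by rewrite in_cons negb_or H2 andbT; apply/eqP.
Qed.

Lemma free_Falls k l phi : free k (Falls l phi) -> free k phi /\ k \notin l.
Proof.
elim: l => [//|n l IH /= [/IH [H1 H2] H3]]; split => //.
by rewrite in_cons negb_or H2 andbT; apply/eqP.
Qed.

Lemma free_FAnds k s : free k (FAnds s) -> exists p, List.In p s /\ free k p.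
Proof.
elim: s => [[]//|p s IH /= [H|/IH [q [H1 H2]]]]; first by exists p; split => //; left.
by exists q; split => //; right.
Qed.

Lemma free_AtMost n k phi : free k (AtMost n phi) -> free k phi /\ k <> 0.
Proof.
elim: n phi => [|n IH] phi /=; first by case.
case=> [[/free_frename [k' [Hk' ->]]|/IH [H H0]] Hu].
- by case: eqP Hu => // Hk'0 _; split.
- case: H => [H|[E|E]]; [by split|by rewrite -E in H0|by rewrite /= -E in Hu].
Qed.

Section DerivedConnectives.
Variable K : structure L.

Lemma sat_Exs (w : nat -> K) l phi : sat w (Exs l phi) <->
  exists w', (forall k, k \notin l -> w' k = w k) /\ sat w' phi.
Proof.
elim: l w => [|n l IH] w /=.
  by split=> [H|[w' [Hw H]]]; [exists w|move: H; apply: sat_ext_imp => k; exact: Hw].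
split=> [[a /IH [w' [Hw H]]]|[w' [Hw H]]].
- exists w'; split => // k; rewrite in_cons negb_or => /andP [/eqP Hkn Hkl].
  by rewrite Hw // upd_neq.
- exists (w' n); apply/IH; exists w'; split => // k Hk.
  case: (k =P n) => [->|Hkn]; first by rewrite upd_eq.
  by rewrite upd_neq // Hw // in_cons negb_or Hk andbT; apply/eqP.
Qed.

Lemma sat_Falls (w : nat -> K) l phi : sat w (Falls l phi) <->
  forall w', (forall k, k \notin l -> w' k = w k) -> sat w' phi.
Proof.
elim: l w => [|n l IH] w /=.
  by split=> [H w' Hw|H]; [move: H; apply: sat_ext_imp => k; rewrite Hw|apply: H].
split=> [H w' Hw|H a].
- have /IH := H (w' n); apply => k Hk.
  case: (k =P n) => [->|Hkn]; first by rewrite upd_eq.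
  by rewrite upd_neq // Hw // in_cons negb_or Hk andbT; apply/eqP.
- apply/IH => w' Hw; apply: H => k; rewrite in_cons negb_or => /andP [/eqP Hkn Hkl].
  by rewrite Hw // upd_neq.
Qed.

Lemma sat_FAnds (w : nat -> K) s : sat w (FAnds s) <-> forall p, List.In p s -> sat w p.
Proof.
elim: s => [|p s IH] /=; first by split=> [_ p []|_ []].
rewrite IH; split=> [[H1 H2] q [<-|Hq]|H]; [by []|exact: H2|split].
- by apply: H; left.
- by move=> q Hq; apply: H; right.
Qed.

Lemma sat_AtMost n (w : nat -> K) phi :
  sat w (AtMost n phi) <-> atmost n (fun b => sat (upd w 0 b) phi).
Proof.
elim: n w phi => [|n IH] w phi /=; first by rewrite atmost0.
rewrite atmostS; set u := (fbound phi).+1.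
have Hu : forall k, free k phi -> k != u.
  by move=> k /free_fbound Hk; apply/eqP => Eku; move: Hk; rewrite Eku /u ltnNge leqnSn.
have Hc : forall a b, sat (upd (upd w u a) 0 b) phi <-> sat (upd w 0 b) phi.
  move=> a b; apply: sat_coinc => k Hk; rewrite /upd.
  by case: (k =P 0) => // _; rewrite (negbTE (Hu k Hk)).
have Hren : forall a, sat (upd w u a) (frename (fun k => if k == 0 then u else k) phi) <->
                      sat (upd w 0 a) phi.
  move=> a; rewrite sat_frename; apply: sat_coinc => k Hk; rewrite /upd.
  case: (k =P 0) => [_|_]; first by rewrite eqxx.
  by rewrite (negbTE (Hu k Hk)).
have Hua : forall a b, upd (upd w u a) 0 b u = a by move=> a b; rewrite /upd eqxx.
split=> H a.
- move=> Ha; case: (H a) => [/Hren //|/IH].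
  by apply: atmost_imp => b; rewrite /= Hc Hua.
- case: (classic (sat (upd w 0 a) phi)) => Ha; [right|left; rewrite Hren //].
  by apply/IH; move: (H a Ha); apply: atmost_imp => b; rewrite /= Hc Hua.
Qed.
End DerivedConnectives.
End Formulas.

(** * Algebraic closure *)

Section AlgebraicClosure.
Variables (L : signature) (K : structure L).
Implicit Types (C S A : K -> Prop).

Lemma acl_mono C C' (a : K) : (forall c, C c -> C' c) -> acl C a -> acl C' a.
Proof.
move=> H [phi [v [Hp [Ha Hs]]]]; exists phi, v; split => // k Hk Hk0; apply: H; exact: Hp.
Qed.

Lemma acl_extract_param C (a b : K) :
  acl (fun c => c = b \/ C c) a ->
  exists (psi : formula L) (v : nat -> K) (n : nat),
    [/\ forall k, free k psi -> 1 < k -> C (v k),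
        sat (upd (upd v 1 b) 0 a) psi &
        atmost n (fun x => sat (upd (upd v 1 b) 0 x) psi)].
Proof.
move=> [psi [v [HP [Ha [s Hs]]]]].
(* parameters outside [C] are equal to [b] and get replaced by the variable 1 *)
pose g k := if k == 0 then 0 else
  if excluded_middle_informative (C (v k)) then k.+2 else 1.
have Hsat : forall x, sat (upd (upd (fun k => v k.-2) 1 b) 0 x) (frename g psi) <->
                      sat (upd v 0 x) psi.
  move=> x; rewrite sat_frename; apply: sat_coinc => k Hk; rewrite /g /upd.
  case: (k =P 0) => // Hk0; case: excluded_middle_informative => HC /=.
  - by [].
  - by case: (HP k Hk Hk0) => // ->.
exists (frename g psi), (fun k => v k.-2), (size s); split.
- move=> k /free_frename [k' [Hk' ->]]; rewrite /g.
  case: (k' =P 0) => // _; case: excluded_middle_informative => //= HC _.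
- exact/Hsat.
- by exists s; split => // x /Hsat; exact: Hs.
Qed.

Lemma acl_trans1 C (a b : K) :
  acl (fun c => c = b \/ C c) a -> acl C b -> acl C a.
Proof.
move=> /acl_extract_param [psi [v [n [HP Ha Hn]]]] [th [u [HT [Hb [sb Hsb]]]]].
(* [U] stores the parameters of [psi] at even and those of [th] at odd positions *)
pose U k := if odd k then u k./2 else v k./2.
pose psi' := frename (fun k => if k < 2 then k else k.*2) psi.
pose th' := frename (fun k => k.*2.+1) th.
pose fib Y x := sat (upd (upd v 1 Y) 0 x) psi.
have Hpsi' : forall (w : nat -> K) Y x, w 0 = x -> w 1 = Y ->
    (forall k, w k.+2.*2 = v k.+2) -> (sat w psi' <-> fib Y x).
  move=> w Y x Hw0 Hw1 Hw; rewrite sat_frename; apply: sat_ext => -[|[|k]] //=.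
have Hth' : forall (w : nat -> K) Y, w 1 = Y -> (forall k, w k.*2.+3 = u k.+1) ->
    (sat w th' <-> sat (upd u 0 Y) th).
  move=> w Y Hw1 Hw; rewrite sat_frename; apply: sat_ext => -[|k] //.
  by rewrite doubleS Hw.
have HU : forall k, U k.+2.*2 = v k.+2 by move=> k; rewrite /U odd_double doubleK.
have HU' : forall k, U k.*2.+3 = u k.+1.
  by move=> k; rewrite /U /= odd_double /= uphalf_double.
(* [a] solves [psi(-, Y)], which has at most [n] solutions, for some [Y] solving [th] *)
exists (Fex 1 (Fand th' (Fand psi' (AtMost n psi')))), U; split; last split.
- move=> k /= [[Hk|[Hk|/free_AtMost [Hk _]]] Hk1] Hk0;
    have [k' [Hk' E]] := free_frename Hk; subst k; clear Hk.
  + by case: k' Hk' Hk1 Hk0 => [//|k'] Hk' _ _; rewrite HU'; apply: HT.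
  + by case: k' Hk' Hk1 Hk0 => [|[|k']] Hk' //= _ _; rewrite HU; apply: HP.
  + by case: k' Hk' Hk1 Hk0 => [|[|k']] Hk' //= _ _; rewrite HU; apply: HP.
- exists b; split; first by rewrite (Hth' _ b).
  split; first by rewrite (Hpsi' _ b a).
  apply/sat_AtMost; apply: atmost_imp Hn => x; by rewrite (Hpsi' _ b x).
- have Hfin : forall Y, List.In Y sb ->
      finite_pred (fun x => fib Y x /\ atmost n (fib Y)).
    move=> Y _; case: (classic (atmost n (fib Y))) => [[l [_ Hl]]|HnY].
    + by exists l => x [Hx _]; exact: Hl.
    + by exists [::] => x [_ /HnY].
  have [l Hl] := finite_pred_bigcup Hfin.
  exists l => x /= [Y [HthY [HpsY HA]]]; apply: Hl; exists Y.
  + by apply: Hsb; move: HthY; rewrite (Hth' _ Y).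
  + split; first by move: HpsY; rewrite (Hpsi' _ Y x).
    by move: HA; rewrite sat_AtMost; apply: atmost_imp => z; rewrite (Hpsi' _ Y z).
Qed.

Lemma acl_trans_list S A (a : K) (l : list K) :
  (forall c, A c -> acl S c) ->
  acl (fun c => S c \/ (List.In c l /\ A c)) a -> acl S a.
Proof.
move=> HA; elim: l a => [|c0 l IH] a Ha.
- by apply: acl_mono Ha => c [//|[[]]].
- apply: IH; case: (classic (A c0)) => Hc0.
  + apply: (@acl_trans1 _ _ c0); last by apply: acl_mono (HA c0 Hc0) => c; left.
    apply: acl_mono Ha => c [Hc|[[<-|Hl] HAc]]; [right; left|left|right; right] => //.
  + apply: acl_mono Ha => c [Hc|[[<-|Hl] HAc]]; [left|by []|right] => //.
Qed.

Lemma acl_trans S A (a : K) :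
  acl (fun c => S c \/ A c) a -> (forall c, A c -> acl S c) -> acl S a.
Proof.
move=> [psi [v [HP [Ha Hs]]]] HA.
apply: (@acl_trans_list S A a (List.map v (List.seq 0 (fbound psi)))) => //.
exists psi, v; split => // k Hk Hk0; case: (HP k Hk Hk0) => H; [by left|right; split => //].
apply: List.in_map; apply/List.in_seq; split; first exact/leP.
rewrite /=; apply/leP; exact: free_fbound Hk.
Qed.

Lemma acl_trans_acl0 S A (a : K) :
  acl (fun c => S c \/ A c) a -> (forall c, A c -> acl (fun _ => False) c) -> acl S a.
Proof. by move=> H HA; apply: acl_trans H _ => c /HA; apply: acl_mono. Qed.
End AlgebraicClosure.

(** * Elementary extensions and saturation *)

Section ElementaryEmbedding.
Variables (L : signature) (M N : structure L) (e : M -> N).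
Hypothesis He : elementary_embedding e.

Lemma elem_models : models_theory_of M N.
Proof.
move=> phi Hall w.
have HM : sat (fun _ => univ_elt M) (Falls (iota 0 (fbound phi)) phi).
  by apply/sat_Falls => w' _; exact: Hall.
have : sat w (Falls (iota 0 (fbound phi)) phi).
  move/He: HM; apply: sat_coinc_imp => k /free_Falls [Hk].
  by rewrite mem_iota /= add0n (free_fbound Hk).
by move/sat_Falls; apply.
Qed.

Lemma elem_acl0 (c : M) : acl (fun _ => False) c -> acl (fun _ : N => False) (e c).
Proof.
move=> [psi [v [HP [Hc [s Hs]]]]].
have : sat v (AtMost (size s) psi) by apply/sat_AtMost; exists s; split.
move/He/sat_AtMost => [l [_ Hl]].
exists psi, (fun k => e (v k)); split; last split.
- move=> k Hk Hk0; exact: HP Hk Hk0.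
- by move/He: Hc; apply: sat_ext_imp => k; rewrite /upd; case: eqP.
- by exists l.
Qed.

Lemma elem_exchange : geometric M -> exchange N.
Proof. by move=> Hg; case: (Hg N elem_models). Qed.
End ElementaryEmbedding.

Section Geometric.
Variables (L : signature) (M : structure L).
Hypothesis Hgeo : geometric M.

Lemma elem_id : elementary_embedding (fun x : M => x).
Proof. by []. Qed.

Lemma geometric_exchange : exchange M.
Proof. exact: elem_exchange elem_id Hgeo. Qed.

Lemma geometric_uniform_finiteness : uniform_finiteness M.
Proof. exact: (@Hgeo M (fun phi H w => H w)).2. Qed.
End Geometric.

Section Saturation.
Variables (L : signature) (M : structure L).
Hypothesis Hsat : omega_saturated M.
Variables (F : list nat) (v : nat -> M).
Hypothesis F0 : ~ List.In 0 F.

Definition params_among (phi : formula L) := forall k, free k phi -> k = 0 \/ List.In k F.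

Lemma realize_avoiding_finite (psi : formula L) :
  params_among psi -> ~ finite_pred (fun a => sat (upd v 0 a) psi) ->
  exists a, sat (upd v 0 a) psi /\
    forall th, params_among th -> finite_pred (fun b => sat (upd v 0 b) th) ->
      ~ sat (upd v 0 a) th.
Proof.
move=> Hpsi Hinf.
pose Sigma (phi : formula L) := phi = psi \/ exists th, phi = Fnot th /\
  params_among th /\ finite_pred (fun b => sat (upd v 0 b) th).
have [a Ha] : exists a, forall phi, Sigma phi -> sat (upd v 0 a) phi.
  apply: Hsat; first by move=> phi [->|[th [-> [Hth _]]]]; [exact: Hpsi|exact: Hth].
  move=> s Hs.
  have Hfin : forall phi, List.In phi s ->
      finite_pred (fun b => phi <> psi /\ ~ sat (upd v 0 b) phi).
    move=> phi /Hs [->|[th [-> [_ [l Hl]]]]]; first by exists [::] => b [].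
    by exists l => b [_ /NNPP]; exact: Hl.
  have [l Hl] := finite_pred_bigcup Hfin.
  have [a Ha] : exists a, sat (upd v 0 a) psi /\ ~ List.In a l.
    apply: NNPP => Hn; apply: Hinf; exists l => a Ha.
    by apply: NNPP => Hal; apply: Hn; exists a.
  exists a => phi Hphi; case: (classic (phi = psi)) => [->|Hne]; first by case: Ha.
  apply: NNPP => Hn; apply: Ha.2; apply: Hl; by exists phi.
exists a; split; first by apply: Ha; left.
by move=> th Hth Hfin; apply: (Ha (Fnot th)); right; exists th.
Qed.

Lemma acl_params_among (th : formula L) (w : nat -> M) :
  (forall k, free k th -> k <> 0 -> exists2 k', List.In k' F & w k = v k') ->
  exists th', params_among th' /\ forall b, sat (upd v 0 b) th' <-> sat (upd w 0 b) th.
Proof.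
move=> HT.
pose g k := if k == 0 then 0 else epsilon (inhabits 0) (fun k' => List.In k' F /\ w k = v k').
have Hg : forall k, free k th -> k <> 0 -> List.In (g k) F /\ w k = v (g k).
  move=> k Hk Hk0; rewrite /g; case: eqP => // _.
  apply: (epsilon_spec (inhabits 0) (fun k' => List.In k' F /\ w k = v k')).
  by have [k' H1 H2] := HT k Hk Hk0; exists k'.
exists (frename g th); split.
- move=> k /free_frename [k' [Hk' ->]]; case: (k' =P 0) => [->|Hk0]; first by left.
  by right; exact: (Hg k' Hk' Hk0).1.
- move=> b; rewrite sat_frename; apply: sat_coinc => k Hk; rewrite /upd.
  case: (k =P 0) => [->|Hk0] //.
  have [H1 H2] := Hg k Hk Hk0.
  have Hg0 : g k != 0 by apply/eqP => E; rewrite E in H1.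
  by rewrite (negbTE Hg0) H2.
Qed.

Lemma exists_nonalgebraic_point (psi : formula L) :
  params_among psi -> ~ finite_pred (fun a => sat (upd v 0 a) psi) ->
  exists a, sat (upd v 0 a) psi /\
            ~ acl (fun c => exists2 k, List.In k F & c = v k) a.
Proof.
move=> Hpsi Hinf; have [a [Ha Havoid]] := realize_avoiding_finite Hpsi Hinf.
exists a; split => // -[th [w [HT [Hth Hfin]]]].
have [th' [Hth' Heq]] := acl_params_among HT.
by apply: (Havoid th') => //; [case: Hfin => l Hl; exists l => b /Heq /Hl|apply/Heq].
Qed.
End Saturation.

Lemma params_among_iota (L : signature) n (phi : formula L) :
  fbound phi <= n.+1 -> params_among (iota 1 n) phi.
Proof.
move=> Hn k Hk; case: (k =P 0) => [->|/eqP Hk0]; [by left|right; apply/In_mem].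
by rewrite mem_iota add1n lt0n Hk0 (leq_trans (free_fbound Hk) Hn).
Qed.

Lemma notin0_iota n : ~ List.In 0 (iota 1 n).
Proof. by move/In_mem; rewrite mem_iota. Qed.

(** * Presentations of definable sets *)

Section Environments.
Variables (L : signature) (K : structure L).

Lemma ext_lt n (x : 'I_n -> K) v k (H : k < n) : ext x v k = x (Ordinal H).
Proof. by rewrite /ext insubT. Qed.

Lemma ext_ord n (x : 'I_n -> K) v (i : 'I_n) : ext x v i = x i.
Proof. by rewrite (ext_lt x v (ltn_ord i)); congr x; apply: val_inj. Qed.

Lemma ext_ge n (x : 'I_n -> K) v k : n <= k -> ext x v k = v k.
Proof. by move=> H; rewrite /ext insubF // ltnNge H. Qed.
End Environments.

Section Presentations.
Variables (L : signature) (M : structure L).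

(* A presentation [(phi, v)] of arity [n] denotes, in an extension [e : M -> K],
   the set of [x : 'I_n -> K] satisfying [phi] when the variables [0..n-1] are
   read as [x] and every other variable [k] as the parameter [e (v k)]. *)
Definition pres := (formula L * (nat -> M))%type.
Definition d0 := univ_elt M.

Definition interp (K : structure L) (e : M -> K) n (P : pres) (x : 'I_n -> K) : Prop :=
  sat (ext x (fun k => e (P.2 k))) P.1.

Definition pres_over (A : M -> Prop) n (P : pres) := params_in A n P.1 P.2.

(* [psubst h P] replaces coordinate [j] of [P] by coordinate [i] of a [p]-tuple
   if [h j = inl i] and by the constant [c] if [h j = inr c]; the old parameters
   go to the even and the constants to the odd variables beyond [p], and the
   junk value [d0] fills the remaining ones. *)
Definition psubst_var n p (h : 'I_n -> 'I_p + M) k :=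
  match insub k : option 'I_n with
  | Some j => match h j with inl i => val i | inr _ => p + k.*2.+1 end
  | None => p + k.*2 end.
Definition psubst_val n p (h : 'I_n -> 'I_p + M) (v : nat -> M) k :=
  if k < p then d0 else
  if odd (k - p) then
     match insub (k - p)./2 : option 'I_n with
     | Some j => match h j with inr c => c | inl _ => d0 end
     | None => d0 end
  else v (k - p)./2.
Definition psubst n p (h : 'I_n -> 'I_p + M) (P : pres) : pres :=
  (frename (psubst_var h) P.1, psubst_val h P.2).

Lemma psubst_val_even n p h v k : @psubst_val n p h v (p + k.*2) = v k.
Proof. by rewrite /psubst_val ltnNge leq_addr /= addKn odd_double doubleK. Qed.

Lemma psubst_val_odd n p h v (j : 'I_n) : @psubst_val n p h v (p + j.*2.+1) =
   match h j with inr c => c | inl _ => d0 end.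
Proof.
rewrite /psubst_val ltnNge leq_addr /= addKn /= odd_double /= uphalf_double.
by rewrite valK.
Qed.

Lemma interp_psubst (K : structure L) (e : M -> K) n p h P (x : 'I_p -> K) :
  interp e (@psubst n p h P) x <->
  interp e P (fun j => match h j with inl i => x i | inr c => e c end).
Proof.
rewrite /interp /= sat_frename; apply: sat_ext => k; rewrite /psubst_var.
case: insubP => [j _ <-|Hk].
- rewrite ext_ord; case E: (h j) => [i|c]; first by rewrite ext_ord.
  by rewrite ext_ge ?leq_addr // psubst_val_odd E.
- by rewrite ext_ge ?leq_addr // psubst_val_even ext_ge // leqNgt.
Qed.

Lemma pres_over_psubst A n p h P :
  pres_over A n P -> (forall j c, h j = inr c -> A c) -> pres_over A p (@psubst n p h P).
Proof.
move=> HP Hh k /free_frename [k' [Hk' ->]]; rewrite /psubst_var.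
case: insubP => [j _ Ej|Hk].
- case E: (h j) => [i|c] Hp; first by move: (ltn_ord i); rewrite ltnNge Hp.
  by rewrite /= -Ej psubst_val_odd E; apply: Hh E.
- move=> _; rewrite /= psubst_val_even; apply: HP => //; by rewrite leqNgt.
Qed.

(* the parameters of the two conjuncts are interleaved beyond [n] *)
Definition and_g1 n k := if k < n then k else n + (k - n).*2.
Definition and_g2 n k := if k < n then k else n + (k - n).*2.+1.
Definition and_v n (v1 v2 : nat -> M) k :=
  if k < n then d0 else if odd (k - n) then v2 (n + (k - n)./2) else v1 (n + (k - n)./2).
Definition pand n (P Q : pres) : pres :=
  (Fand (frename (and_g1 n) P.1) (frename (and_g2 n) Q.1), and_v n P.2 Q.2).

Lemma and_v1 n v1 v2 k : n <= k -> and_v n v1 v2 (n + (k - n).*2) = v1 k.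
Proof. by move=> H; rewrite /and_v ltnNge leq_addr /= addKn odd_double doubleK subnKC. Qed.
Lemma and_v2 n v1 v2 k : n <= k -> and_v n v1 v2 (n + (k - n).*2.+1) = v2 k.
Proof.
by move=> H; rewrite /and_v ltnNge leq_addr /= addKn /= odd_double /= uphalf_double subnKC.
Qed.

Lemma interp_pand (K : structure L) (e : M -> K) n P Q (x : 'I_n -> K) :
  interp e (pand n P Q) x <-> interp e P x /\ interp e Q x.
Proof.
rewrite /interp /= !sat_frename.
have H1 : forall k,
    ext x (fun k => e (and_v n P.2 Q.2 k)) (and_g1 n k) = ext x (fun k => e (P.2 k)) k.
  move=> k; rewrite /and_g1; case: ltnP => Hk; first by rewrite !(ext_lt _ _ Hk).
  by rewrite !ext_ge ?leq_addr ?and_v1.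
have H2 : forall k,
    ext x (fun k => e (and_v n P.2 Q.2 k)) (and_g2 n k) = ext x (fun k => e (Q.2 k)) k.
  move=> k; rewrite /and_g2; case: ltnP => Hk; first by rewrite !(ext_lt _ _ Hk).
  by rewrite !ext_ge ?leq_addr ?and_v2.
by rewrite (sat_ext _ H1) (sat_ext _ H2).
Qed.

Lemma pres_over_pand A n P Q :
  pres_over A n P -> pres_over A n Q -> pres_over A n (pand n P Q).
Proof.
move=> HP HQ k [|] /free_frename [k' [Hk' ->]]; rewrite /and_g1 /and_g2;
  (case: ltnP => Hk Hn; [by move: Hn; rewrite leqNgt Hk|]).
- rewrite /= and_v1 //; exact: HP.
- rewrite /= and_v2 //; exact: HQ.
Qed.

Definition ptrue : pres := (Ftrue L, fun _ => d0).
Definition pands n (ps : seq pres) : pres := foldr (pand n) ptrue ps.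

Lemma interp_pands (K : structure L) (e : M -> K) n ps (x : 'I_n -> K) :
  interp e (pands n ps) x <-> forall P, List.In P ps -> interp e P x.
Proof.
elim: ps => [|P ps IH] /=; first by split=> [_ P []|_ []].
rewrite interp_pand IH; split=> [[H1 H2] Q [<-|HQ]|H] //; first exact: H2.
split; [apply: H; left|move=> Q HQ; apply: H; right] => //.
Qed.

Lemma pres_over_pands A n ps :
  (forall P, List.In P ps -> pres_over A n P) -> pres_over A n (pands n ps).
Proof.
elim: ps => [|P ps IH] H /=; first by move=> k /= [].
apply: pres_over_pand; [apply: H; left|apply: IH => Q HQ; apply: H; right] => //.
Qed.

Definition pnot (P : pres) : pres := (Fnot P.1, P.2).
Lemma interp_pnot (K : structure L) (e : M -> K) n P (x : 'I_n -> K) :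
  interp e (pnot P) x <-> ~ interp e P x.
Proof. by []. Qed.
Lemma pres_over_pnot A n P : pres_over A n P -> pres_over A n (pnot P).
Proof. by []. Qed.

Definition peqc n (j : 'I_n) (c : M) : pres := (Feq (Tvar L j) (Tvar L n), fun _ => c).
Lemma interp_peqc (K : structure L) (e : M -> K) n j c (x : 'I_n -> K) :
  interp e (@peqc n j c) x <-> x j = e c.
Proof. by rewrite /interp /= ext_ord ext_ge. Qed.
Lemma pres_over_peqc A n j c : A c -> pres_over A n (@peqc n j c).
Proof. by move=> Hc k /= [<-|<-] //; rewrite leqNgt ltn_ord. Qed.

Definition pproj n p (tau : 'I_p -> 'I_n) (P : pres) : pres :=
  (Exs (iota p n) (Fand (FAnds [seq Feq (Tvar L (p + tau j)) (Tvar L j) | j <- enum 'I_p])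
                        (frename (addn p) P.1)),
   fun k => P.2 (k - p)).

Lemma interp_pproj (K : structure L) (e : M -> K) n p tau P (x : 'I_p -> K) :
  interp e (@pproj n p tau P) x <->
  exists t : 'I_n -> K, (forall j, t (tau j) = x j) /\ interp e P t.
Proof.
rewrite /interp /pproj sat_Exs; set W := ext x _.
have HW : forall k, p <= k -> W k = e (P.2 (k - p)) by move=> k Hk; rewrite /W ext_ge.
split.
- move=> [w' [Hw [HA HP]]].
  exists (fun j => w' (p + j)); split.
  + move=> j; move/sat_FAnds: HA => /(_ (Feq (Tvar L (p + tau j)) (Tvar L j))) /= ->.
    * rewrite Hw; first by rewrite /W ext_ord. by rewrite mem_iota negb_and -ltnNge ltn_ord.
    * apply/In_map; exists j; split => //; apply/In_mem; exact: mem_enum.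
  + change (sat w' (frename (addn p) P.1)) in HP.
    move: HP; rewrite sat_frename; apply: sat_ext_imp => k /=.
    case: (ltnP k n) => Hk; first by rewrite ext_lt.
    rewrite ext_ge // Hw ?HW ?leq_addr ?addKn //.
    by rewrite mem_iota negb_and ltnNge leq_add2l Hk orbT.
- move=> [t [Ht HP]].
  pose w' k := if k < p then W k else
      match insub (k - p) : option 'I_n with Some j => t j | None => W k end.
  exists w'; split; [|split].
  + move=> k; rewrite mem_iota negb_and -!ltnNge /w' => /orP [->//|Hk].
    case: ltnP => // Hpk; rewrite insubF //; by rewrite ltn_subLR // ltnNge -ltnS Hk.
  + apply/sat_FAnds => phi /In_map [j [_ ->]]; change (w' (p + tau j) = w' j).
    by rewrite {1}/w' ltnNge leq_addr [~~ true]/= addKn valK /w' ltn_ord Ht /W ext_ord.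
  + change (sat w' (frename (addn p) P.1)).
    rewrite sat_frename; move: HP; apply: sat_ext_imp => k.
    rewrite /w' ltnNge leq_addr [~~ true]/= addKn.
    case: insubP => [j _ <-|Hk]; first by rewrite ext_ord.
    rewrite ext_ge; last by rewrite leqNgt. by rewrite HW ?leq_addr // addKn.
Qed.

Lemma pres_over_pproj A n p tau P : pres_over A n P -> pres_over A p (@pproj n p tau P).
Proof.
move=> HP k /= /free_Exs
  [[/free_FAnds [phi [/In_map [j [_ ->]] /= [<-|<-]]]|/free_frename [k' [Hk' ->]]] Hk].
- by rewrite mem_iota leq_addr ltn_add2l ltn_ord in Hk.
- by rewrite leqNgt ltn_ord.
- move=> _; rewrite addKn; apply: HP => //.
  by move: Hk; rewrite mem_iota leq_addr ltn_add2l /= -leqNgt.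
Qed.

Definition pren n p (f : 'I_n -> 'I_p) (P : pres) : pres := psubst (fun j => inl (f j)) P.

Lemma interp_pren (K : structure L) (e : M -> K) n p f P (x : 'I_p -> K) :
  interp e (@pren n p f P) x <-> interp e P (fun j => x (f j)).
Proof. exact: interp_psubst. Qed.

Lemma pres_over_pren A n p f P : pres_over A n P -> pres_over A p (@pren n p f P).
Proof. by move=> HP; apply: pres_over_psubst. Qed.

Definition pavoid n (j : 'I_n) (cs : seq M) : pres :=
  pands n [seq pnot (peqc j c) | c <- cs].

Lemma interp_pavoid (K : structure L) (e : M -> K) n j cs (x : 'I_n -> K) :
  interp e (@pavoid n j cs) x <-> forall c, List.In c cs -> x j <> e c.
Proof.
rewrite interp_pands; split=> [H c Hc Hxc|H P /In_map [c [Hc ->]]].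
- by apply: (H (pnot (peqc j c))); [apply/In_map; exists c|apply/interp_peqc].
- by rewrite interp_pnot interp_peqc; apply: H.
Qed.

Lemma pres_over_pavoid A n j cs : (forall c, List.In c cs -> A c) -> pres_over A n (@pavoid n j cs).
Proof.
move=> Hcs; apply: pres_over_pands => P /In_map [c [Hc ->]].
by apply: pres_over_pnot; apply: pres_over_peqc; apply: Hcs.
Qed.
End Presentations.

(** * Curves *)

Notation acl0 := (acl (fun _ => False)).

Lemma snoc_lift (T : Type) n (x : 'I_n -> T) y (k : 'I_n) : snoc x y (lift ord_max k) = x k.
Proof. by rewrite /snoc liftK. Qed.

Lemma snoc_max (T : Type) n (x : 'I_n -> T) y : snoc x y ord_max = y.
Proof. by rewrite /snoc unlift_none. Qed.

Lemma val_lift_max n (k : 'I_n) : val (lift ord_max k) = k.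
Proof. by rewrite /= /bump leqNgt ltn_ord. Qed.

Lemma strictly_increasing_ltE m n (f : 'I_m -> 'I_n) :
  strictly_increasing f -> forall i j, (f i < f j) = (i < j).
Proof.
move=> Hf i j; case: (ltngtP i j) => [/Hf -> //|Hji|/val_inj ->]; last by rewrite ltnn.
by apply/negbTE; rewrite -leqNgt; apply: ltnW; apply: Hf.
Qed.

Lemma strictly_increasing_inj m n (f : 'I_m -> 'I_n) : strictly_increasing f -> injective f.
Proof.
move=> /strictly_increasing_ltE Hf i j E; apply: val_inj.
by case: (ltngtP i j) => // H; move: H; rewrite -Hf E ltnn.
Qed.

Definition pair2 (T : Type) (z y : T) : 'I_2 -> T := fun j => if val j == 0 then z else y.

Lemma interp_pair2 (L : signature) (M K : structure L) (e : M -> K) (P : pres M) (z y : K) :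
  interp e P (pair2 z y) <-> sat (upd (upd (fun k => e (P.2 k)) 1 y) 0 z) P.1.
Proof.
apply: sat_ext => -[|[|k]]; rewrite ?(ext_lt _ _ (isT : 0 < 2)) ?(ext_lt _ _ (isT : 1 < 2)) //.
by rewrite ext_ge.
Qed.

Definition fiber (L : signature) (M K : structure L) (e : M -> K) (P : pres M) (y : K) :
  K -> Prop := fun z => interp e P (pair2 z y).

Lemma bool_comb_ext (T : Type) (P : (T -> Prop) -> Prop) X Y :
  bool_comb P X -> (forall x, X x <-> Y x) -> bool_comb P Y.
Proof.
move=> HX H; have -> // : Y = X.
by apply: functional_extensionality => x; apply: propositional_extensionality; rewrite H.
Qed.

Lemma bool_comb_forall (T : Type) (P : (T -> Prop) -> Prop) (J : finType)
    (X : J -> T -> Prop) :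
  P (fun _ => True) -> (forall j, bool_comb P (X j)) -> bool_comb P (fun x => forall j, X j x).
Proof.
move=> HT HX.
have Hs : forall s : seq J, bool_comb P (fun x => forall j, List.In j s -> X j x).
  elim=> [|j s IH].
  - by apply: bool_comb_ext (bc_base HT) _ => x; split => // _ j [].
  - apply: bool_comb_ext (bc_and (HX j) IH) _ => x.
    by split=> [[Hj Hs] j' [<-|/Hs]|H] //; split=> [|j' Hj']; apply: H; [left|right].
apply: bool_comb_ext (Hs (enum J)) _ => x.
by split=> H j => [|_]; apply: H; apply/In_mem; rewrite mem_enum.
Qed.

Section Curves.
Variables (L : signature) (M : structure L).

Definition generic_pair n (P : pres M) :=
  exists (N : structure L) (e : M -> N), elementary_embedding e /\
  exists a : 'I_n -> N, interp e P a /\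
  exists j0 j1 : 'I_n, [/\ j0 < j1, ~ acl0 (a j0) & ~ acl (fun c => c = a j0) (a j1)].

Definition curve_pres n (P : pres M) :=
  pres_over acl0 n P /\ forall d, dim_ge n P.1 P.2 d -> d <= 1.

Lemma generic_pair_dim_ge n (P : pres M) : pres_over acl0 n P ->
  generic_pair n P -> dim_ge n P.1 P.2 2.
Proof.
move=> HP [N [e [He [a [Ha [j0 [j1 [H01 H0 H1]]]]]]]].
exists N, e; split => //; exists a; split => //.
exists (fun j : 'I_2 => if val j == 0 then j0 else j1); split.
  by move=> [[|[|i]] Hi] [[|[|j]] Hj].
move=> j Hac.
have {}Hac : acl (fun b => exists j' : 'I_2, j' < j /\ b = a (if val j' == 0 then j0 else j1))
                (a (if val j == 0 then j0 else j1)).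
  by apply: (acl_trans_acl0 Hac) => c [k [Hk [Hnk ->]]]; apply: (elem_acl0 He); exact: HP.
case: j Hac => [[|[|j]] Hj] //= Hac.
- by apply: H0; apply: acl_mono Hac => c [[[|j'] Hj'] []].
- by apply: H1; apply: acl_mono Hac => c [[[|j'] Hj'] [] //= _ ->].
Qed.

Lemma dim_ge_generic_pair n (P : pres M) d : dim_ge n P.1 P.2 d -> 1 < d -> generic_pair n P.
Proof.
move=> [N [e [He [a [Ha [idx [Hinc Hind]]]]]]] Hd.
have H0 : 0 < d by exact: ltnW.
exists N, e; split => //; exists a; split => //.
exists (idx (Ordinal H0)), (idx (Ordinal Hd)); split; first by apply: Hinc.
- by move=> Hac; apply: (Hind (Ordinal H0)); apply: acl_mono Hac => c [].
- move=> Hac; apply: (Hind (Ordinal Hd)); apply: acl_mono Hac => c ->; left.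
  by exists (Ordinal H0).
Qed.

Lemma curve_presP n (P : pres M) :
  curve_pres n P <-> pres_over acl0 n P /\ ~ generic_pair n P.
Proof.
split=> -[HP Hd]; split=> //; first by move/(generic_pair_dim_ge HP)/Hd.
by move=> d /dim_ge_generic_pair Hg; rewrite leqNgt; apply/negP => /Hg.
Qed.

Lemma curve_of_pres n (X : ('I_n -> M) -> Prop) (P : pres M) :
  curve_pres n P -> (forall x, X x <-> interp id P x) -> curve acl0 X.
Proof. by move=> [HP Hd] HX; exists P.1, P.2. Qed.

Lemma pres_of_curve n (X : ('I_n -> M) -> Prop) :
  curve acl0 X -> exists P, curve_pres n P /\ forall x, X x <-> interp id P x.
Proof. by move=> [phi [v [HP [HX Hd]]]]; exists (phi, v). Qed.

Definition pfix_last n (P : pres M) (c : M) : pres M :=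
  psubst (fun j : 'I_n.+1 => if unlift ord_max j is Some k then inl k else inr c) P.

Lemma interp_pfix_last (K : structure L) (e : M -> K) n P c (z : 'I_n -> K) :
  interp e (pfix_last n P c) z <-> interp e P (snoc z (e c)).
Proof.
rewrite interp_psubst; have -> // : (fun j => match
    (if unlift ord_max j is Some k then inl k else inr c) with inl i => z i | inr c' => e c' end)
  = snoc z (e c).
by apply: functional_extensionality => j; rewrite /snoc; case: (unlift ord_max j).
Qed.

Lemma curve_pres_fix_last n (P : pres M) c :
  curve_pres n.+1 P -> acl0 c -> curve_pres n (pfix_last n P c).
Proof.
move=> /curve_presP [HP Hg] Hc; apply/curve_presP; split.
  apply: pres_over_psubst => // j c'; by case: (unlift ord_max j) => // -[<-].
move=> [N [e [He [a [/interp_pfix_last Ha [j0 [j1 [H01 H0 H1]]]]]]]]; apply: Hg.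
exists N, e; split => //; exists (snoc a (e c)); split => //.
by exists (lift ord_max j0), (lift ord_max j1); rewrite !snoc_lift !val_lift_max.
Qed.

Lemma curve_cylinder_setT m : curve_cylinder acl0 (fun _ : 'I_m -> M => True).
Proof.
exists 0, (fun i : 'I_0 => widen_ord (leq0n m) i), (fun _ => True); split; first by case.
split=> //; apply: (@curve_of_pres _ _ (Ftrue L, fun _ => univ_elt M)); last by split=> // _ [].
by apply/curve_presP; split=> [k []|[N [e [_ [a [_ [[? //]]]]]]]].
Qed.

Lemma curve_cylinder_fix_last m k (tau : 'I_k -> 'I_m) (X : ('I_k.+1 -> M) -> Prop) c :
  strictly_increasing tau -> curve acl0 X -> acl0 c ->
  curve_cylinder acl0 (fun x : 'I_m -> M => X (snoc (fun j => x (tau j)) c)).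
Proof.
move=> Htau /pres_of_curve [P [HP HX]] Hc.
exists k, tau, (fun z => X (snoc z c)); split=> //; split=> //.
apply: (curve_of_pres (curve_pres_fix_last HP Hc)) => z.
by rewrite interp_pfix_last; exact: HX.
Qed.

Definition coord_pair n (k : 'I_n) : 'I_2 -> 'I_n.+1 :=
  fun j => if val j == 0 then lift ord_max k else ord_max.

Lemma interp_proj_pair (K : structure L) (e : M -> K) n k (P : pres M) (z y : K) :
  interp e (pproj (@coord_pair n k) P) (pair2 z y) <->
  exists2 t, interp e P t & t (lift ord_max k) = z /\ t ord_max = y.
Proof.
rewrite interp_pproj; split=> [[t [Ht HP]]|[t HP [Hz Hy]]]; exists t => //.
- by split; [exact: (Ht ord0)|exact: (Ht ord_max)].
- by split=> // -[[|[|j]] Hj].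
Qed.

Lemma curve_proj_pair_acl n (k : 'I_n) (P : pres M) : exchange M -> curve_pres n.+1 P ->
  forall z y, fiber id (pproj (coord_pair k) P) y z -> ~ acl0 y -> acl (fun c => c = y) z.
Proof.
move=> Hex /curve_presP [_ Hg] z y /interp_proj_pair [t Ht [Hz Hy]] Hy0.
apply: NNPP => Hzy; apply: Hg.
exists M, id; split; first exact: elem_id.
exists t; split=> //; exists (lift ord_max k), ord_max; split.
- by rewrite val_lift_max ltn_ord.
- by rewrite Hz => Hz0; apply: Hzy; apply: acl_mono Hz0 => c [].
- rewrite Hz Hy => Hyz; apply: Hzy.
  have : acl (fun c => c = y \/ False) z by apply: Hex => //; apply: acl_mono Hyz => c ->; left.
  by apply: acl_mono => c [|[]].
Qed.
End Curves.

(** * Fibers of binary presentations *)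

Section Fibers.
Variables (L : signature) (M : structure L).
Hypothesis UF : uniform_finiteness M.

Lemma fiber_bound (P : pres M) :
  exists K0, forall y, finite_pred (fiber id P y) -> atmost K0 (fiber id P y).
Proof.
have [K0 HK0] := UF P.1; exists K0 => y [l Hl].
case: (HK0 (upd P.2 1 y)) => [Hinf|[s [Hs Hs']]].
- by case: Hinf; exists l => z Hz; apply: Hl; apply/interp_pair2.
- exists s; split; first by rewrite size_length; apply/leP.
  by move=> z /interp_pair2; exact: Hs'.
Qed.

Lemma infinite_fibers_definable (A : M -> Prop) (P : pres M) : pres_over A 2 P ->
  exists th : formula L, (forall k, free k th -> k <> 0 -> A (P.2 k)) /\
    forall y, sat (upd P.2 0 y) th <-> ~ finite_pred (fiber id P y).
Proof.
move=> HP; have [K0 HK0] := fiber_bound P.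
pose g k := if k == 1 then 0 else k.
exists (frename g (Fnot (AtMost K0 P.1))); split.
- move=> k /free_frename [k' [/free_AtMost [Hk' Hk'0] ->]]; rewrite /g.
  case: (k' =P 1) => // Hk'1 _; apply: HP Hk' _.
  by case: k' Hk'0 Hk'1 => [|[|k']].
- move=> y; rewrite sat_frename /= sat_AtMost.
  have Hfib : forall b, sat (upd (fun k => upd P.2 0 y (g k)) 0 b) P.1 <-> fiber id P y b.
    by move=> b; rewrite /fiber interp_pair2; apply: sat_ext => -[|[|k]].
  rewrite (atmost_iff _ Hfib); split=> Hn Hfin; apply: Hn.
  + exact: HK0.
  + exact: finite_pred_atmost Hfin.
Qed.

(* outside the finitely many [y] with infinite fiber, the fibers are uniformly
   bounded in [M], hence also in any elementary extension *)
Lemma fiber_acl (P : pres M) (cs : seq M) :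
  pres_over acl0 2 P -> (forall c, List.In c cs -> acl0 c) ->
  (forall y, ~ finite_pred (fiber id P y) -> List.In y cs) ->
  forall (N : structure L) (e : M -> N), elementary_embedding e ->
  forall z y, fiber e P y z -> (forall c, List.In c cs -> y <> e c) ->
  acl (fun c => c = y) z.
Proof.
move=> HP Hcs Hinf N e He z y Hz Hy.
pose R := pand 2 P (pavoid (ord_max : 'I_2) cs).
have HR : forall (K : structure L) (e' : M -> K) z' y',
    fiber e' R y' z' <-> fiber e' P y' z' /\ forall c, List.In c cs -> y' <> e' c.
  by move=> K e' z' y'; rewrite /fiber interp_pand interp_pavoid.
have [K0 HK0] := fiber_bound R.
have HRM : sat R.2 (Fall 1 (AtMost K0 R.1)).
  move=> y'; apply/sat_AtMost; apply: atmost_imp (HK0 y' _) => [b Hb|].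
    exact/(interp_pair2 id).
  case: (classic (List.In y' cs)) => Hy'; first by exists [::] => b /HR [_ /(_ y' Hy')].
  have [l Hl] : finite_pred (fiber id P y') by apply: NNPP => /Hinf.
  by exists l => b /HR [/Hl].
move/He: HRM => /(_ y) /sat_AtMost [lN [_ HlN]].
apply: (@acl_trans_acl0 _ _ (fun c => c = y) acl0) => //.
exists R.1, (upd (fun k => e (R.2 k)) 1 y); split; last split.
- move=> k Hk Hk0; case: (k =P 1) => [->|Hk1]; first by left; rewrite upd_eq.
  right; rewrite upd_neq //; apply: (elem_acl0 He).
  apply: (pres_over_pand HP (pres_over_pavoid Hcs)) Hk _.
  by case: k Hk0 Hk1 => [|[|k]].
- exact/interp_pair2/HR.
- by exists lN.
Qed.

Section Saturated.
Hypothesis Hsat : omega_saturated M.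

Variable P : pres M.
Hypothesis HP : pres_over acl0 2 P.
Hypothesis P_acl : forall z y, fiber id P y z -> ~ acl0 y -> acl (fun c => c = y) z.

Lemma infinite_fibers_finite : finite_pred (fun y => ~ finite_pred (fiber id P y)).
Proof.
have [th [_ Hthy]] := infinite_fibers_definable HP.
apply: NNPP => Hinf.
have [y [/Hthy Hy Hyg]] : exists y, sat (upd P.2 0 y) th /\
    ~ acl (fun c => exists2 k, List.In k (iota 1 (fbound th)) & c = P.2 k) y.
  apply: exists_nonalgebraic_point => //; first exact: notin0_iota.
    exact: params_among_iota.
  by case=> l Hl; apply: Hinf; exists l => b /Hthy /Hl.
have [z [/(interp_pair2 id) Hz Hzg]] : exists z, sat (upd (upd P.2 1 y) 0 z) P.1 /\
    ~ acl (fun c => exists2 k, List.In k (iota 1 (fbound P.1).+1) & c = upd P.2 1 y k) z.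
  apply: exists_nonalgebraic_point => //; first exact: notin0_iota.
    exact/params_among_iota/leqW/leqnSn.
  by case=> l Hl; apply: Hy; exists l => b /interp_pair2 /Hl.
apply: Hzg; apply: acl_mono (P_acl Hz _) => [c ->|Hy0].
  by exists 1; [apply/In_mem; rewrite mem_iota|rewrite upd_eq].
by apply: Hyg; apply: acl_mono Hy0 => c [].
Qed.

Lemma infinite_fibers_acl0 y : ~ finite_pred (fiber id P y) -> acl0 y.
Proof.
move=> Hy; have [th [Hth Hthy]] := infinite_fibers_definable HP.
have [l Hl] := infinite_fibers_finite.
apply: (@acl_trans_acl0 _ _ (fun _ => False) acl0) => //.
exists th, P.2; split; first by move=> k Hk Hk0; right; exact: Hth.
by split; [exact/Hthy|exists l => b /Hthy; exact: Hl].
Qed.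
End Saturated.
End Fibers.

(** * Conjunctions of curves *)

Section ConjunctionOfCurves.
Variables (L : signature) (M : structure L).
Hypotheses (Hgeo : geometric M) (Hsat : omega_saturated M).
(* keep the index [i] of [s i k] and [C i x] explicit *)
Unset Implicit Arguments.
Variables (n r : nat) (m : 'I_r -> nat) (s : forall i : 'I_r, 'I_(m i) -> 'I_n).
Variable C : forall i : 'I_r, ('I_(m i).+1 -> M) -> Prop.
Set Implicit Arguments.
Hypothesis Hs : forall i, strictly_increasing (s i).
Hypothesis HC : forall i, curve acl0 (C i).
Variables (m' : nat) (sig : 'I_m' -> 'I_n).
Hypothesis Hsig : strictly_increasing sig.
Hypothesis Hsig_img : forall j : 'I_n,
  (exists k, sig k = j) <-> (exists (i : 'I_r) (k : 'I_(m i)), s i k = j).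

Definition curve_pres_of i := epsilon (inhabits (ptrue M))
  (fun P => curve_pres (m i).+1 P /\ forall x, C i x <-> interp id P x).

Lemma curve_pres_ofP i :
  curve_pres (m i).+1 (curve_pres_of i) /\ forall x, C i x <-> interp id (curve_pres_of i) x.
Proof. exact: (epsilon_spec (inhabits (ptrue M)) _ (pres_of_curve (HC i))). Qed.

Lemma sig_covers i (k : 'I_(m i)) : exists j, sig j == s i k.
Proof.
have [j Hj] := (Hsig_img (s i k)).2 (ex_intro _ i (ex_intro _ k erefl)).
by exists j; apply/eqP.
Qed.

(* the position of the coordinate [s i k] inside the tuple [x'] *)
Definition tau i (k : 'I_(m i)) : 'I_m' := xchoose (sig_covers k).
Arguments tau : clear implicits.

Lemma sig_tau i k : sig (tau i k) = s i k.
Proof. exact: eqP (xchooseP (sig_covers k)). Qed.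

Lemma tau_increasing i : strictly_increasing (tau i).
Proof. by move=> a b Hab; rewrite -(strictly_increasing_ltE Hsig) !sig_tau; apply: Hs. Qed.

Definition rho i (j : 'I_(m i).+1) : 'I_m'.+1 :=
  if unlift ord_max j is Some k then lift ord_max (tau i k) else ord_max.
Arguments rho : clear implicits.

Lemma snoc_rho (T : Type) (x' : 'I_m' -> T) y i :
  (fun j => snoc x' y (rho i j)) = snoc (fun k => x' (tau i k)) y.
Proof.
apply: functional_extensionality => j; rewrite /rho.
by case: (unliftP ord_max j) => [k ->|->]; rewrite ?snoc_lift ?snoc_max ?liftK ?unlift_none.
Qed.

Definition proj_pair_of i (k : 'I_(m i)) := pproj (coord_pair k) (curve_pres_of i).
Arguments proj_pair_of : clear implicits.

Lemma proj_pair_of_over i k : pres_over acl0 2 (proj_pair_of i k).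
Proof. exact: pres_over_pproj (curve_pres_ofP i).1.1. Qed.

Definition bad_value y := exists i k, ~ finite_pred (fiber id (proj_pair_of i k) y).

Lemma proj_pair_of_acl i k z y :
  fiber id (proj_pair_of i k) y z -> ~ acl0 y -> acl (fun c => c = y) z.
Proof. exact: (curve_proj_pair_acl (geometric_exchange Hgeo) (curve_pres_ofP i).1). Qed.

Lemma bad_value_finite : finite_pred bad_value.
Proof.
apply: finite_pred_bigcup_fin => i; apply: finite_pred_bigcup_fin => k.
apply: (infinite_fibers_finite (geometric_uniform_finiteness Hgeo) Hsat
  (@proj_pair_of_over i k)); exact: proj_pair_of_acl.
Qed.

Lemma bad_value_acl0 y : bad_value y -> acl0 y.
Proof.
move=> [i [k]]; apply: (infinite_fibers_acl0 (geometric_uniform_finiteness Hgeo) Hsat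
  (@proj_pair_of_over i k)); exact: proj_pair_of_acl.
Qed.

Variable bad : seq M.
Hypothesis badE : forall y, List.In y bad <-> bad_value y.

Definition conj_pres := pand m'.+1
  (pands m'.+1 [seq pren (rho i) (curve_pres_of i) | i <- enum 'I_r])
  (pavoid (ord_max : 'I_m'.+1) bad).

Lemma interp_conj_pres (K : structure L) (e : M -> K) (u : 'I_m'.+1 -> K) :
  interp e conj_pres u <->
  (forall i, interp e (curve_pres_of i) (fun j => u (rho i j))) /\
  (forall c, List.In c bad -> u ord_max <> e c).
Proof.
rewrite interp_pand interp_pands interp_pavoid; split=> -[H1 H2]; split=> //.
- move=> i; rewrite -interp_pren; apply: H1.
  by apply/In_map; exists i; split => //; apply/In_mem; rewrite mem_enum.
- by move=> P /In_map [i [_ ->]]; rewrite interp_pren.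
Qed.

Lemma conj_pres_over : pres_over acl0 m'.+1 conj_pres.
Proof.
apply: pres_over_pand; last by apply: pres_over_pavoid => c /badE /bad_value_acl0.
apply: pres_over_pands => P /In_map [i [_ ->]].
exact: pres_over_pren (curve_pres_ofP i).1.1.
Qed.

Lemma conj_pres_coord_acl (N : structure L) (e : M -> N) (a : 'I_m'.+1 -> N) :
  elementary_embedding e -> interp e conj_pres a ->
  forall j, acl (fun c => c = a ord_max) (a (lift ord_max j)).
Proof.
move=> He /interp_conj_pres [Ha Hbad] j.
have [i [k Hik]] := (Hsig_img (sig j)).1 (ex_intro _ j erefl).
have Htau : tau i k = j by apply: (strictly_increasing_inj Hsig); rewrite sig_tau.
apply: (@fiber_acl _ _ (geometric_uniform_finiteness Hgeo) _ bad (@proj_pair_of_over i k)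
  _ _ _ _ He) => //.
- by move=> c /badE /bad_value_acl0.
- by move=> y Hy; apply/badE; exists i, k.
- apply/interp_proj_pair; exists (fun jj => a (rho i jj)); first exact: Ha.
  by rewrite /rho liftK unlift_none Htau.
Qed.

Lemma conj_pres_curve : curve_pres m'.+1 conj_pres.
Proof.
apply/curve_presP; split; first exact: conj_pres_over.
move=> [N [e [He [a [Ha [j0 [j1 [H01 H0 H1]]]]]]]].
have Hj0 : j0 < m' by apply: leq_trans H01 _; rewrite -ltnS ltn_ord.
have Hj0E : lift ord_max (Ordinal Hj0) = j0 by apply: val_inj; rewrite val_lift_max.
have Hy : acl (fun c => c = a j0) (a ord_max).
  have := elem_exchange He Hgeo (C := fun _ => False) (a := a j0) (b := a ord_max).
  move=> /(_ _ H0) Hx; apply: acl_mono (Hx _) => [c [|[]] //|].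
  rewrite -Hj0E; apply: acl_mono (conj_pres_coord_acl He Ha (Ordinal Hj0)) => c ->.
  by left.
apply: H1; case: (unliftP ord_max j1) => [k ->|->] //.
apply: (@acl_trans1 _ _ _ _ (a ord_max)) => //.
by apply: acl_mono (conj_pres_coord_acl He Ha k) => c ->; left.
Qed.

Definition fixed_conj (c : M) (x' : 'I_m' -> M) := forall i, C i (snoc (fun k => x' (tau i k)) c).

Lemma fixed_conj_bool_comb c : acl0 c -> bool_comb (curve_cylinder acl0 (m := m')) (fixed_conj c).
Proof.
move=> Hc; apply: bool_comb_forall; first exact: curve_cylinder_setT.
by move=> i; apply/bc_base/curve_cylinder_fix_last => //; apply: tau_increasing.
Qed.

Lemma conj_curvesE (x : 'I_n -> M) y :
  (forall i, C i (snoc (fun k => x (s i k)) y)) <->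
  interp id conj_pres (snoc (fun k => x (sig k)) y) \/
  List.In y bad /\ fixed_conj y (fun k => x (sig k)).
Proof.
have Hx i : (fun k => x (sig (tau i k))) = (fun k => x (s i k)).
  by apply: functional_extensionality => k; rewrite sig_tau.
have HCi i : interp id (curve_pres_of i) (fun j => snoc (fun k => x (sig k)) y (rho i j)) <->
             C i (snoc (fun k => x (s i k)) y).
  by rewrite snoc_rho Hx -(curve_pres_ofP i).2.
rewrite interp_conj_pres snoc_max /fixed_conj; split.
- move=> H; case: (classic (List.In y bad)) => Hy; [right|left].
  + by split=> // i; rewrite Hx.
  + by split=> [i|c Hc Hyc]; [apply/HCi|apply: Hy; rewrite Hyc].
- by case=> [[H _]|[_ H]] i; [apply/HCi|rewrite -Hx].
Qed.
End ConjunctionOfCurves.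

Theorem lemma3p6 (L : signature) (M : structure L)
  (Hgeo : geometric M) (Hsat : omega_saturated M)
  (n r : nat) (m : 'I_r -> nat) (s : forall i : 'I_r, 'I_(m i) -> 'I_n)
  (Hs : forall i, strictly_increasing (s i))
  (C : forall i : 'I_r, ('I_(m i).+1 -> M) -> Prop)
  (HC : forall i, curve (acl (fun _ : M => False)) (C i))
  (m' : nat) (sig : 'I_m' -> 'I_n) (Hsig : strictly_increasing sig)
  (Hsig_img : forall j : 'I_n,
      (exists k, sig k = j) <-> (exists (i : 'I_r) (k : 'I_(m i)), s i k = j)) :
  exists (E : ('I_m'.+1 -> M) -> Prop) (Ln : nat) (q : 'I_Ln -> M)
         (phi : 'I_Ln -> ('I_m' -> M) -> Prop),
    curve (acl (fun _ : M => False)) E /\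
    (forall l, acl (fun _ : M => False) (q l)) /\
    (forall l, bool_comb (curve_cylinder (acl (fun _ : M => False)) (m:=m')) (phi l)) /\
    (forall (x : 'I_n -> M) (y : M),
       (forall i, C i (snoc (fun k => x (s i k)) y)) <->
       (E (snoc (fun k => x (sig k)) y) \/
        exists l, y = q l /\ phi l (fun k => x (sig k)))) /\
    (forall (x' : 'I_m' -> M) (y : M), E (snoc x' y) -> forall l, y <> q l).
Proof.
have [bad badE] := finite_pred_exact (bad_value_finite Hgeo Hsat HC).
have bad_acl0 c : List.In c bad -> acl0 c by move/badE; exact: bad_value_acl0.
pose q (l : 'I_(size bad)) := nth (univ_elt M) bad l.
have bad_q y : List.In y bad <-> exists l, y = q l := In_nth_ord (univ_elt M) bad y.
exists (interp id (conj_pres C Hsig_img bad)), (size bad), q,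
  (fun l => fixed_conj C Hsig_img (q l)).
split; first exact: curve_of_pres (conj_pres_curve Hgeo Hsat HC Hsig Hsig_img badE) _.
split; first by move=> l; apply/bad_acl0/bad_q; exists l.
split; first by move=> l; apply/fixed_conj_bool_comb/bad_acl0/bad_q => //; exists l.
split.
- move=> x y; rewrite (conj_curvesE HC Hsig_img bad).
  split=> -[H|H]; [by left| |by left|]; right.
  + by case: H => /bad_q [l ->] H; exists l.
  + by case: H => l [-> H]; split=> //; apply/bad_q; exists l.
- move=> x' y /interp_conj_pres [_ Hy] l; rewrite -(snoc_max x' y); apply: Hy.
  by apply/bad_q; exists l.
Qed.
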